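(* Let $\{\Delta_1,\dots,\Delta_r\}$ be a nef-partition of a reflexive polytope $\Delta$ with dual nef-partition $\{\nabla_1,\dots,\nabla_r\}$. Then $l(\Delta^* )=l(\nabla_1)+\dots+l(\nabla_r)-r+1$.
   Context: Let $M\cong\mathbb Z^d$, $N=\mathrm{Hom}(M,\mathbb Z)$. For a lattice polytope $\Theta$, $l(\Theta)$ is its number of lattice points. A $d$-dimensional lattice polytope $\Delta\subset M_{\mathbb R}$ is reflexive if $\Delta=\{x:\langle x,e_k\rangle\ge-1,\ k=1,\dots,n\}$ with $e_k\in N$ the primitive inward facet normals; $\Delta^*=\mathrm{Conv}(e_1,\dots,e_n)$. A nef-partition is a Minkowski decomposition $\Delta=\Delta_1+\dots+\Delta_r$ into lattice polytopes with $\varphi_j(e_k)\in\{0,1\}$ for all $j,k$, $\varphi_j(y)=-\min_{x\in\Delta_j}\langle x,y\rangle$; the dual nef-partition consists of $\nabla_j=\mathrm{Conv}(\{0\}\cup\{e_k:\varphi_j(e_k)=1\})\subset N_{\mathbb R}$. *)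

(* Lattice M = Z^d, N = Hom(M,Z) identified with Z^d via the
   standard pairing. Polytopes are handled through their rational points
   (all data are rational). *)
From HB Require Import structures.
From mathcomp Require Import all_boot all_order all_algebra.
Set Implicit Arguments. Unset Strict Implicit. Unset Printing Implicit Defensive.
Import Order.TTheory GRing.Theory Num.Theory.
Local Open Scope ring_scope.

Notation lpt d := 'rV[int]_d.
Notation qpt d := 'rV[rat]_d.

Definition vQ (d : nat) (z : lpt d) : qpt d := map_mx (fun k : int => k%:~R) z.

Definition pair (d : nat) (x y : qpt d) : rat := \sum_(i < d) x 0 i * y 0 i.

Definition inConvP (d : nat) (S : seq (lpt d)) (P : lpt d -> Prop) (x : qpt d)
  : Prop :=
  exists w : 'I_(size S) -> rat,
    [/\ forall i, 0 <= w i,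
        forall i, w i != 0 -> P (nth 0 S i),
        \sum_i w i = 1 &
        x = \sum_i w i *: vQ (nth 0 S i)].

Definition inConv (d : nat) (S : seq (lpt d)) (x : qpt d) : Prop :=
  inConvP S (fun _ => True) x.

Definition aff_indep (d n : nat) (p : 'I_n -> qpt d) : Prop :=
  \rank (row_mx (\matrix_(i < n, j < d) p i 0 j) (const_mx 1 : 'M[rat]_(n, 1)))
  = n.

Definition full_dim (d : nat) (V : seq (lpt d)) : Prop :=
  exists p : 'I_d.+1 -> qpt d, (forall i, inConv V (p i)) /\ aff_indep p.

Definition primitive (d : nat) (e : lpt d) : Prop :=
  forall (k : int) (y : lpt d), e = k *: y -> k = 1 \/ k = -1.

(* e is the primitive inward normal of a facet of the d-dimensional polytope
   Conv(V): Conv(V) lies in {<x,e> >= m}, and the face {<x,e> = m} contains d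
   affinely independent points (so it has dimension d-1). *)
Definition facet_normal (d : nat) (V : seq (lpt d)) (e : lpt d) : Prop :=
  primitive e /\
  exists m : rat,
    (forall x, inConv V x -> m <= pair x (vQ e)) /\
    exists p : 'I_d -> qpt d,
      (forall i, inConv V (p i) /\ pair (p i) (vQ e) = m) /\ aff_indep p.

(* phi_S(y) = c, where phi_S(y) = - min_{x in Conv S} <x, y> *)
Definition phi_is (d : nat) (S : seq (lpt d)) (y : lpt d) (c : rat) : Prop :=
  (exists x, inConv S x /\ pair x (vQ y) = - c) /\
  (forall x, inConv S x -> - c <= pair x (vQ y)).

Definition lcount_is (d : nat) (X : qpt d -> Prop) (n : nat) : Prop :=
  exists L : seq (lpt d),
    [/\ uniq L, forall z, z \in L <-> X (vQ z) & size L = n].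

(** Write [h_j(y) = min_{x in Delta_j} <x, y> = - phi_j(y)].  The nef condition
says [h_j(e_k)] is [0] or [-1], and by the Minkowski decomposition [sum_j h_j(y)]
is the minimum of [<., y>] over [Delta]: it is [>= -1] at every [e_k] and
[<= -1] at every nonzero lattice point [y], since [0] is an interior point of
[Delta] and the minimum is an integer.  Hence a nonzero lattice point of
[nabla_j] has [h_j <= -1] and [h_i >= 0] for [i <> j], so the [nabla_j] meet
only in [0] and lie in [Delta^*].  Conversely, let [z = sum_k l_k e_k] be a
nonzero lattice point of [Delta^*] and [v] the sum of minimizers of [<., z>] on
the [Delta_j]; then [<v, z> = -1] forces [v] onto every facet [e_k] with
[l_k > 0], so each [h_j] is linear on these [e_k].  The integers
[-h_j(z) = sum_k l_k phi_j(e_k) >= 0] add up to [1], hence exactly one is [1]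
and [z] lies in that [nabla_j].  As [Delta] is bounded, Gordan's alternative
puts [0] in [Delta^*], and counting the lattice points of the [r] polytopes
[nabla_j], glued at [0], gives the formula. *)

From HB Require Import structures.
From mathcomp Require Import all_boot all_order all_algebra.
From mathcomp Require Import ring lra.
Set Implicit Arguments. Unset Strict Implicit. Unset Printing Implicit Defensive.
Import Order.TTheory GRing.Theory Num.Theory.

Lemma count_mem_subset (T : eqType) (A B : seq T) : uniq A -> uniq B ->
  {subset B <= A} -> count (mem B) A = size B.
Proof.
move=> uA uB BA; rewrite -size_filter; apply/perm_size/uniq_perm => // [|z].
  exact: filter_uniq.
by rewrite mem_filter; apply/andP/idP => [[]|zB] //; split => //; apply: BA.
Qed.

Lemma size_pointed_partition (T : eqType) (I : finType) (x : T) (L : seq T)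
    (Ls : I -> seq T) : uniq L -> (forall i, uniq (Ls i)) ->
  x \in L -> (forall i, x \in Ls i) ->
  (forall z, z != x -> z \in L <-> exists i, z \in Ls i) ->
  (forall i j z, z != x -> z \in Ls i -> z \in Ls j -> i = j) ->
  size L + #|I| = \sum_i size (Ls i) + 1.
Proof.
move=> uL uLs xL xLs cover disj; pose f z := \sum_i (z \in Ls i : nat).
have Ls_sub i : {subset Ls i <= L}.
  by move=> z zLi; have [->|zx] := eqVneq z x => //; apply/(cover z zx); exists i.
have sum_f : \sum_(z <- L) f z = \sum_i size (Ls i).
  rewrite exchange_big; apply: eq_bigr => i _.
  rewrite -(count_mem_subset uL (uLs i) (Ls_sub i)).
  by rewrite -sum1_count [RHS]big_mkcond; apply: eq_bigr.
have f_x : f x = #|I|.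
  by rewrite /f (eq_bigr (fun=> 1)) ?sum1_card // => i _; rewrite xLs.
have f_rem z : z \in rem x L -> f z = 1.
  rewrite mem_rem_uniq // => /andP [zx /(cover z zx) [j zj]].
  rewrite /f (bigD1 j) //= zj big1 // => i ij; apply/eqP; rewrite eqb0.
  by apply/negP => zi; move: ij; rewrite (disj _ _ _ zx zi zj) eqxx.
rewrite -sum_f (big_rem x xL) /= f_x big_seq (eq_bigr _ f_rem) -big_seq sum1_size.
have L_gt0 : 0 < size L by rewrite lt0n size_eq0; apply: contraTneq xL => ->.
by rewrite size_rem // -addnA addn1 prednK // addnC.
Qed.

Local Open Scope ring_scope.

Lemma small_perturbation (T : eqType) (G H : T -> rat) (s : seq T) :
  (forall t, t \in s -> 0 < G t) ->
  exists2 e, 0 < e & forall t, t \in s -> 0 < G t + e * H t.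
Proof.
move=> G_gt0; pose S := \sum_(t <- s) `|H t| / G t.
have S_ge0 : 0 <= S.
  by rewrite /S big_seq sumr_ge0 // => t ts; rewrite divr_ge0 // ltW ?G_gt0.
have e_gt0 : 0 < (1 + S)^-1 by rewrite invr_gt0 ltr_wpDr.
exists (1 + S)^-1 => // t ts; have Gt := G_gt0 t ts.
have HS : `|H t| / G t <= S.
  rewrite /S (big_rem t ts) lerDl big_seq sumr_ge0 // => t' /mem_rem t's.
  by rewrite divr_ge0 // ltW ?G_gt0.
have ex_lt1 : (1 + S)^-1 * (`|H t| / G t) < 1.
  by rewrite mulrC ltr_pdivrMr ?ltr_wpDr // mul1r; lra.
have HGx : `|H t| = G t * (`|H t| / G t) by rewrite mulrC divfK // gt_eqF.
have : - `|H t| <= H t by rewrite lerNl -normrN ler_norm.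
have : 0 <= (1 + S)^-1 * (`|H t| / G t).
  by apply: mulr_ge0; [exact: ltW | rewrite divr_ge0 // ltW].
nra.
Qed.

Lemma psum_tight n (la a b : 'I_n -> rat) : (forall k, 0 <= la k) ->
  (forall k, b k <= a k) -> \sum_k la k * a k <= \sum_k la k * b k ->
  forall k, la k != 0 -> a k = b k.
Proof.
move=> la_ge0 ba sum_le k la_neq0.
have terms_ge0 i : 0 <= la i * (a i - b i) by rewrite mulr_ge0 ?subr_ge0.
have sum0 : \sum_i la i * (a i - b i) = 0.
  apply/eqP; rewrite eq_le sumr_ge0 // andbT.
  by under eq_bigr do rewrite mulrBr; rewrite sumrB subr_le0.
have /eqP := psumr_eq0P (fun i _ => terms_ge0 i) sum0 (i := k) isT.
by rewrite mulf_eq0 (negPf la_neq0) subr_eq0 => /eqP.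
Qed.

Lemma int_num_ge1 (x : rat) : x \is a Num.int -> 0 < x -> 1 <= x.
Proof. by move=> /intrP [m ->]; rewrite ltr0z ler1z. Qed.

Section Pairing.
Variable d : nat.
Implicit Types (x y z : qpt d) (a b : lpt d).

Lemma pairC x y : pair x y = pair y x.
Proof. by apply: eq_bigr => i _; rewrite mulrC. Qed.

Lemma pair_suml I (s : seq I) (P : pred I) (F : I -> qpt d) z :
  pair (\sum_(i <- s | P i) F i) z = \sum_(i <- s | P i) pair (F i) z.
Proof.
by rewrite /pair exchange_big; apply: eq_bigr => j _; rewrite summxE mulr_suml.
Qed.

Lemma pairZl c x z : pair (c *: x) z = c * pair x z.
Proof. by rewrite /pair mulr_sumr; apply: eq_bigr => i _; rewrite mxE mulrA. Qed.

Lemma pairDl x y z : pair (x + y) z = pair x z + pair y z.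
Proof. by rewrite /pair -big_split; apply: eq_bigr => i _; rewrite mxE mulrDl. Qed.

Lemma pairNl x z : pair (- x) z = - pair x z.
Proof. by rewrite -scaleN1r pairZl mulN1r. Qed.

Lemma pair0l z : pair 0 z = 0.
Proof. by rewrite -(scale0r 0) pairZl mul0r. Qed.

Lemma pair_sumr I (s : seq I) (P : pred I) (F : I -> qpt d) z :
  pair z (\sum_(i <- s | P i) F i) = \sum_(i <- s | P i) pair z (F i).
Proof. by rewrite pairC pair_suml; apply: eq_bigr => i _; rewrite pairC. Qed.

Lemma pairZr c x z : pair z (c *: x) = c * pair z x.
Proof. by rewrite pairC pairZl pairC. Qed.

Lemma pairNr x z : pair z (- x) = - pair z x.
Proof. by rewrite pairC pairNl pairC. Qed.

Lemma pairDr x y z : pair z (x + y) = pair z x + pair z y.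
Proof. by rewrite pairC pairDl !(pairC z). Qed.

Lemma pair0r z : pair z 0 = 0.
Proof. by rewrite pairC pair0l. Qed.

Lemma pair_gt0 x : x != 0 -> 0 < pair x x.
Proof.
move=> /eqP x_neq0; rewrite lt_def sumr_ge0 => [|i _]; last by rewrite -expr2 sqr_ge0.
rewrite andbT; apply/eqP => /psumr_eq0P x0; apply: x_neq0.
apply/matrixP => i j; rewrite (ord1 i) mxE.
by apply/eqP; rewrite -sqrf_eq0 expr2 x0 // => k _; rewrite -expr2 sqr_ge0.
Qed.

Lemma vQ0 : vQ (0 : lpt d) = 0.
Proof. by apply/matrixP => i j; rewrite !mxE. Qed.

Lemma vQ_eq0 a : (vQ a == 0) = (a == 0).
Proof.
apply/eqP/eqP => [/matrixP va0|->]; last exact: vQ0.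
apply/matrixP => i j; move: (va0 i j); rewrite !mxE => /eqP.
by rewrite intr_eq0 => /eqP.
Qed.

Lemma pair_vQ_int a b : pair (vQ a) (vQ b) \is a Num.int.
Proof. by rewrite /pair rpred_sum // => i _; rewrite !mxE -intrM intr_int. Qed.

End Pairing.

Section ConvexHull.
Variable d : nat.
Implicit Types (S : seq (lpt d)) (P : lpt d -> Prop) (x y : qpt d).

(* [minpair S y] is [min_{x in Conv S} <x, y> = - phi_S(y)]; the seed
   [head 0 S] only provides the junk value [0] when [S = [::]]. *)
Definition minpair S y : rat :=
  \big[Num.min/pair (vQ (head 0 S)) y]_(s <- S) pair (vQ s) y.

Lemma minpair_le S y s : s \in S -> minpair S y <= pair (vQ s) y.
Proof. by move=> sS; apply: ge_bigmin_seq. Qed.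

Lemma minpair_attained S y : S != [::] ->
  exists2 s, s \in S & minpair S y = pair (vQ s) y.
Proof.
move=> S_neq0; apply/mapP; rewrite /minpair big_seq.
apply: (big_ind (fun m => m \in map _ S)) => [|m1 m2 m1S m2S|s sS].
- by case: S S_neq0 => //= s S _; rewrite mem_head.
- by rewrite /Num.min; case: ifP.
- exact: map_f.
Qed.

Lemma inConvP_vertex S P s : s \in S -> P s -> inConvP S P (vQ s).
Proof.
move=> sS Ps; pose k := Ordinal (etrans (index_mem s S) sS).
exists (fun i => (i == k)%:R); split => [i|i||].
- by rewrite ler0n.
- by rewrite pnatr_eq0 eqb0 negbK => /eqP ->; rewrite nth_index.
- by rewrite (bigD1 k) //= eqxx big1 ?addr0 // => i /negbTE ->.
- rewrite (bigD1 k) //= eqxx scale1r nth_index // big1 ?addr0 // => i.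
  by move/negbTE ->; rewrite scale0r.
Qed.

Lemma inConvP_ge S P x y c : inConvP S P x ->
  (forall s, s \in S -> P s -> c <= pair (vQ s) y) -> c <= pair x y.
Proof.
move=> [w [w_ge0 wP w1 ->]] Sc; rewrite pair_suml -[c]mul1r -w1 mulr_suml.
apply: ler_sum => i _; rewrite pairZl.
have [->|wi_neq0] := eqVneq (w i) 0; first by rewrite !mul0r.
by rewrite ler_wpM2l // Sc ?mem_nth //; apply: wP.
Qed.

Lemma minpair_le_conv S x y : inConv S x -> minpair S y <= pair x y.
Proof. by move=> Sx; apply: (inConvP_ge Sx) => s sS _; apply: minpair_le. Qed.

Lemma inConvP_neq_nil S P x : inConvP S P x -> S != [::].
Proof.
by case: S => // [[w [_ _]]]; rewrite big_ord0 => /eqP; rewrite eq_sym oner_eq0.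
Qed.

Lemma phi_isE S (e : lpt d) c : S != [::] ->
  phi_is S e c <-> c = - minpair S (vQ e).
Proof.
move=> S_neq0; have [s sS se] := minpair_attained (vQ e) S_neq0.
split=> [[[x [Sx xe]] Sc]|->].
  apply/eqP; rewrite eq_le lerNr -xe minpair_le_conv //= lerNl se.
  exact/Sc/inConvP_vertex.
split; first by exists (vQ s); rewrite opprK se; split=> //; apply: inConvP_vertex.
by move=> x Sx; rewrite opprK minpair_le_conv.
Qed.

Lemma minpair0 S : S != [::] -> minpair S 0 = 0.
Proof. by move=> /(minpair_attained 0) [s _ ->]; rewrite pair0r. Qed.

Lemma minpair_int S (z : lpt d) : S != [::] -> minpair S (vQ z) \is a Num.int.
Proof. by move=> /(minpair_attained (vQ z)) [s _ ->]; apply: pair_vQ_int. Qed.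

Lemma minpair_conic S n (mu : 'I_n -> rat) (ys : 'I_n -> qpt d) : S != [::] ->
  (forall k, 0 <= mu k) ->
  \sum_k mu k * minpair S (ys k) <= minpair S (\sum_k mu k *: ys k).
Proof.
move=> /(minpair_attained (\sum_k mu k *: ys k)) [s sS ->] mu_ge0.
rewrite pair_sumr; apply: ler_sum => k _.
by rewrite pairZr ler_wpM2l ?minpair_le.
Qed.

Lemma inConvP_cons S P Q a x : (forall s, P s -> Q s) ->
  inConvP S P x -> inConvP (a :: S) Q x.
Proof.
move=> PQ [w [w_ge0 wP w1 ->]].
pose w' (i : 'I_(size S).+1) := if unlift ord0 i is Some k then w k else 0.
have w'E k : w' (lift ord0 k) = w k by rewrite /w' liftK.
have w'E0 : w' ord0 = 0 by rewrite /w' unlift_none.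
exists w'; split => [i|i||].
- by rewrite /w'; case: unlift.
- by rewrite /w'; case: unliftP => [k ->|->] // /wP /PQ.
- by rewrite big_ord_recl w'E0 add0r -w1; apply: eq_bigr => k _; rewrite w'E.
- rewrite big_ord_recl w'E0 scale0r add0r.
  by apply: eq_bigr => k _; rewrite w'E.
Qed.

Lemma inConvP_cons0 S P x : inConvP (0 :: S) P x ->
  exists mu : 'I_(size S) -> rat, [/\ forall k, 0 <= mu k,
    forall k, mu k != 0 -> P S`_k, \sum_k mu k <= 1 &
    x = \sum_k mu k *: vQ S`_k].
Proof.
move=> [w [w_ge0 wP]]; rewrite /= !big_ord_recl vQ0 scaler0 add0r => w1 ->.
exists (fun k => w (lift ord0 k)); split => // [k|]; first exact: wP.
by rewrite -w1 lerDr.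
Qed.

End ConvexHull.

Section Gordan.
Variable d : nat.
Implicit Types (A : seq (qpt d)) (a b u w : qpt d).

Definition zero_in_hull A := exists l : nat -> rat,
  [/\ forall i, 0 <= l i, \sum_(i < size A) l i = 1 &
      \sum_(i < size A) l i *: A`_i = 0].

Definition positive_on A u := forall a, a \in A -> 0 < pair u a.

Lemma zero_in_hull_cons a A : zero_in_hull A -> zero_in_hull (a :: A).
Proof.
move=> [l [l_ge0 l1 lA]]; exists (fun i => if i is i'.+1 then l i' else 0).
by split=> [[]||]; rewrite //= big_ord_recl ?scale0r add0r.
Qed.

(* Fourier-Motzkin step: the vectors [<u, b> a - <u, a> b] are orthogonal to
   [u], and either alternative for them lifts to [a :: A]. *)
Lemma zero_in_hull_elim a A u : positive_on A u -> pair u a <= 0 ->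
  zero_in_hull [seq pair u b *: a - pair u a *: b | b <- A] ->
  zero_in_hull (a :: A).
Proof.
move=> Au c_le0 [m [m_ge0]]; rewrite size_map => m1 mB.
set c := pair u a in c_le0 mB; pose g i := pair u A`_i.
have g_gt0 (i : 'I_(size A)) : 0 < g i by apply/Au/mem_nth.
set s := \sum_(i < size A) m i * g i.
have s_gt0 : 0 < s.
  have mg_ge0 (i : 'I_(size A)) : 0 <= m i * g i.
    by apply: mulr_ge0 => //; apply: ltW.
  rewrite lt_def sumr_ge0 ?andbT //; apply/eqP => s0.
  move: m1; rewrite big1 => [/eqP|i _]; first by rewrite eq_sym oner_eq0.
  have /eqP := psumr_eq0P (fun i _ => mg_ge0 i) s0 (i := i) isT.
  by rewrite mulf_eq0 (gt_eqF (g_gt0 i)) orbF => /eqP.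
have sc_neq0 : s - c != 0 by rewrite gt_eqF //; lra.
have sA : s *: a - c *: \sum_(i < size A) m i *: A`_i = 0.
  rewrite -[RHS]mB /s scaler_suml scaler_sumr -sumrB; apply: eq_bigr => i _.
  by rewrite (nth_map 0) // scalerBr !scalerA mulrC (mulrC c).
clearbody c s.
exists (fun i => (if i is k.+1 then - c * m k else s) / (s - c)); split.
- by case=> [|k]; rewrite divr_ge0 ?mulr_ge0 ?oppr_ge0 //; lra.
- by rewrite /= big_ord_recl -mulr_suml -mulr_sumr m1 mulr1 -mulrDl divff.
- rewrite /= big_ord_recl.
  transitivity ((s - c)^-1 *: (s *: a - c *: \sum_(i < size A) m i *: A`_i)).
    rewrite scalerBr !scalerA scaler_sumr -sumrN mulrC; congr (_ + _).
    apply: eq_bigr => i _; rewrite !scalerA -scaleNr; congr (_ *: _).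
    by rewrite lift0 /=; field.
  by rewrite sA scaler0.
Qed.

Lemma positive_on_elim a A u w : A != [::] -> positive_on A u -> pair u a <= 0 ->
  positive_on [seq pair u b *: a - pair u a *: b | b <- A] w ->
  exists v, positive_on (a :: A) v.
Proof.
move=> A_neq0 Au c_le0 Bw; set c := pair u a in c_le0 Bw; set p := pair w a.
have key b : b \in A -> 0 < pair u b * p - c * pair w b.
  by move=> bA; have := Bw _ (map_f _ bA); rewrite pairDr pairNr !pairZr.
have [c0|c_lt0] := eqVneq c 0.
  have [b bA] : exists b, b \in A.
    by case: A A_neq0 {Au Bw key} => // b A _; exists b; rewrite mem_head.
  have p_gt0 : 0 < p by have := key b bA; rewrite c0 mul0r subr0 pmulr_rgt0 // Au.
  have [e e_gt0 eA] := small_perturbation (pair w) Au.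
  exists (u + e *: w) => b'; rewrite inE pairDl pairZl => /predU1P [->|/eA //].
  by rewrite -/c c0 add0r mulr_gt0.
have {}c_lt0 : c < 0 by rewrite lt_neqAle c_lt0.
pose G b := (pair u b * p - c * pair w b) / - c.
have G_gt0 b : b \in A -> 0 < G b by move/key => ?; rewrite divr_gt0 ?oppr_gt0.
have [e e_gt0 eA] := small_perturbation (fun b => - pair u b) G_gt0.
exists (w + (p / - c - e) *: u) => b; rewrite inE pairDl pairZl => /predU1P [->|bA].
  have -> : p + (p / - c - e) * c = e * - c by field; rewrite ?oppr_eq0 lt_eqF.
  by rewrite mulr_gt0 ?oppr_gt0.
by have := eA b bA; congr (0 < _); rewrite /G; field; rewrite ?oppr_eq0 lt_eqF.
Qed.

Lemma gordan A : zero_in_hull A \/ exists u, positive_on A u.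
Proof.
move: {2}(size A) (leqnn (size A)) => n; elim: n A => [|n IH] [|a A] //=;
  try by right; exists 0.
move=> sizeA; have [A0|[u Au]] := IH A sizeA; first by left; apply: zero_in_hull_cons.
have [c_gt0|c_le0] := ltP 0 (pair u a).
  by right; exists u => b; rewrite inE => /predU1P [->|/Au].
have [A0|A_neq0] := eqVneq A [::].
  rewrite A0; have [->|a_neq0] := eqVneq a 0.
    by left; exists (fun=> 1); split; rewrite // big_ord1 ?scaler0.
  by right; exists a => b; rewrite inE => /eqP ->; apply: pair_gt0.
have sizeB : (size [seq (pair u b *: a - pair u a *: b)%R | b <- A] <= n)%N.
  by rewrite size_map.
have [B0|[w Bw]] := IH _ sizeB.
  by left; apply: zero_in_hull_elim B0.
by right; apply: positive_on_elim Bw.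
Qed.

End Gordan.

Section ReflexivePolytope.
Variables (d : nat) (V E : seq (lpt d)).
Hypothesis reflV :
  forall x, inConv V x <-> (forall e, e \in E -> -1 <= pair x (vQ e)).

Lemma reflexive_negative_point y : y != 0 -> exists2 x, inConv V x & pair x y < 0.
Proof.
move=> y_neq0; have [t t_gt0 tE] := @small_perturbation _ (fun=> 1)
  (fun e => - pair y (vQ e)) E (fun _ _ => ltr01).
exists (- (t *: y)); last by rewrite pairNl pairZl oppr_lt0 mulr_gt0 ?pair_gt0.
by apply/reflV => e /tE; rewrite pairNl pairZl; lra.
Qed.

Lemma reflexive_recession_eq0 w : (forall e, e \in E -> 0 <= pair w (vQ e)) -> w = 0.
Proof.
move=> wE; apply/eqP/negP => /negP w_neq0; have ww_gt0 := pair_gt0 w_neq0.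
pose B := \sum_(v <- V) `|pair (vQ v) w|.
have B_ge0 : 0 <= B by rewrite sumr_ge0.
have VB v : v \in V -> pair (vQ v) w <= B.
  move=> vV; apply: le_trans (ler_norm _) _.
  by rewrite /B (big_rem v vV) lerDl sumr_ge0.
pose t := (B + 1) / pair w w.
have t_ge0 : 0 <= t by rewrite divr_ge0 ?ltW // ltr_wpDl.
have tw : inConv V (t *: w).
  by apply/reflV => e eE; rewrite pairZl; have := mulr_ge0 t_ge0 (wE e eE); lra.
have : pair (t *: w) (- w) >= - B.
  by apply: (inConvP_ge tw) => v vV _; rewrite pairNr lerN2 VB.
by rewrite pairNr pairZl /t divfK ?gt_eqF //; lra.
Qed.

Lemma reflexive_zero_in_dual : (0 < d)%N -> inConv E 0.
Proof.
move=> d_gt0; have [[l [l_ge0 l1 lE]]|[u Eu]] := gordan (map (@vQ d) E).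
  rewrite size_map in l1 lE; exists (fun i => l i); split => //.
  by rewrite -[LHS]lE; apply: eq_bigr => i _; rewrite (nth_map 0).
have u0 : u = 0 by apply: reflexive_recession_eq0 => e eE; apply/ltW/Eu/map_f.
have E0 e : e \in E -> False by move/(map_f (@vQ d))/Eu; rewrite u0 pair0l ltxx.
(* With [E] empty every vector is a recession direction, which fails for [d > 0]. *)
have /matrixP/(_ 0 (Ordinal d_gt0)) : const_mx 1 = 0 :> qpt d.
  by apply: reflexive_recession_eq0 => e /E0.
by rewrite !mxE => /eqP; rewrite oner_eq0.
Qed.

End ReflexivePolytope.

Section NefPartition.
Variables (d r : nat) (V E : seq (lpt d)) (D : 'I_r -> seq (lpt d)).
Hypothesis reflV :
  forall x, inConv V x <-> (forall e, e \in E -> -1 <= pair x (vQ e)).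
Hypothesis minkV : forall x, inConv V x <->
  exists xs : 'I_r -> qpt d, (forall j, inConv (D j) (xs j)) /\ x = \sum_j xs j.
Hypothesis nefD : forall j e, e \in E -> phi_is (D j) e 0 \/ phi_is (D j) e 1.
Hypothesis D_neq_nil : forall j, D j != [::].

Definition nabla j := inConvP (0 :: E) (fun e => e = 0 \/ phi_is (D j) e 1).

Lemma minpair_sum_le x y : inConv V x -> \sum_j minpair (D j) y <= pair x y.
Proof.
move=> /minkV [xs [Dxs ->]]; rewrite pair_suml.
by apply: ler_sum => j _; apply: minpair_le_conv.
Qed.

Lemma minpair_sum_attained y : exists s : 'I_r -> lpt d,
  [/\ forall j, s j \in D j, forall j, minpair (D j) y = pair (vQ (s j)) y
    & inConv V (\sum_j vQ (s j))].
Proof.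
have /fin_all_exists [s sP] j :
    exists s, s \in D j /\ minpair (D j) y = pair (vQ s) y.
  by have [s ? ?] := minpair_attained y (D_neq_nil j); exists s.
exists s; split=> [j|j|]; try by case: (sP j).
apply/minkV; exists (fun j => vQ (s j)); split=> // j.
by apply: inConvP_vertex; case: (sP j).
Qed.

Lemma minpair_nef j e : e \in E ->
  minpair (D j) (vQ e) = 0 \/ minpair (D j) (vQ e) = -1.
Proof.
move=> eE; have phiE c := phi_isE e c (D_neq_nil j).
by case: (nefD j eE) => /phiE e_phi; [left|right]; rewrite -[LHS]opprK -e_phi ?oppr0.
Qed.

Lemma minpair_sum_normal_ge e : e \in E -> -1 <= \sum_j minpair (D j) (vQ e).
Proof.
move=> eE; have [s [_ smin sV]] := minpair_sum_attained (vQ e).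
by rewrite (eq_bigr _ (fun j _ => smin j)) -pair_suml; apply: (reflV _).1.
Qed.

Lemma minpair_normal_other i j e : e \in E -> minpair (D j) (vQ e) = -1 ->
  i != j -> 0 <= minpair (D i) (vQ e).
Proof.
move=> eE ej_m1 ij; have := minpair_sum_normal_ge eE.
rewrite (bigD1 j) //= ej_m1 (bigD1 i) //=.
have : \sum_(k | (k != j) && (k != i)) minpair (D k) (vQ e) <= 0.
  by apply: sumr_le0 => k _; case: (minpair_nef k eE) => ->; rewrite ?lerN10.
lra.
Qed.

Lemma minpair_sum_lattice_le (z : lpt d) : z != 0 ->
  \sum_j minpair (D j) (vQ z) <= -1.
Proof.
rewrite -vQ_eq0 => /(reflexive_negative_point reflV) [x xV xz].
rewrite lerNr int_num_ge1 ?rpredN ?rpred_sum // => [j _|].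
  exact: minpair_int.
by rewrite oppr_gt0 (le_lt_trans (minpair_sum_le _ xV)).
Qed.

Lemma zero_in_nabla j : nabla j 0.
Proof. by rewrite -(vQ0 d); apply: inConvP_vertex; [rewrite mem_head | left]. Qed.

Lemma nabla_minpair j (z : lpt d) : z != 0 -> nabla j (vQ z) ->
  [/\ inConv E (vQ z), minpair (D j) (vQ z) <= -1 &
      forall i, i != j -> 0 <= minpair (D i) (vQ z)].
Proof.
move=> z_neq0 /inConvP_cons0 [mu [mu_ge0 muP mu_le1 zE]].
have conic i : \sum_k mu k * minpair (D i) (vQ E`_k) <= minpair (D i) (vQ z).
  by rewrite zE; apply: minpair_conic.
have other i : i != j -> 0 <= minpair (D i) (vQ z).
  move=> ij; apply: le_trans (conic i); apply: sumr_ge0 => k _.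
  have [->|mu_neq0] := eqVneq (mu k) 0; first by rewrite mul0r.
  rewrite mulr_ge0 //; case: (muP k mu_neq0) => [->|/phi_isE e_phi].
    by rewrite vQ0 minpair0.
  apply: (minpair_normal_other (mem_nth 0 (ltn_ord k)) _ ij).
  by rewrite -[LHS]opprK -e_phi ?D_neq_nil.
have own : - \sum_k mu k <= minpair (D j) (vQ z).
  apply: le_trans (conic j); rewrite -sumrN; apply: ler_sum => k _.
  rewrite -mulrN1 ler_wpM2l //.
  by case: (minpair_nef j (mem_nth 0 (ltn_ord k))) => ->; rewrite ?lerN10.
have := minpair_sum_lattice_le z_neq0; rewrite (bigD1 j) //=.
have : 0 <= \sum_(i | i != j) minpair (D i) (vQ z) by apply: sumr_ge0 => i /other.
move=> rest_ge0 sum_le; split=> //; last by lra.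
by exists mu; split=> //; apply/eqP; rewrite eq_le mu_le1; lra.
Qed.

Lemma nabla_disjoint i j (z : lpt d) : z != 0 ->
  nabla i (vQ z) -> nabla j (vQ z) -> i = j.
Proof.
move=> z_neq0 /(nabla_minpair z_neq0) [_ zi _] /(nabla_minpair z_neq0) [_ _ zj].
by apply/eqP/negP => /negP /zj; lra.
Qed.

Lemma dual_minpair_linear (z : lpt d) (la : 'I_(size E) -> rat) :
  z != 0 -> (forall k, 0 <= la k) -> \sum_k la k = 1 ->
  vQ z = \sum_k la k *: vQ E`_k ->
  forall j, minpair (D j) (vQ z) = \sum_k la k * minpair (D j) (vQ E`_k).
Proof.
move=> z_neq0 la_ge0 la1 zE; have [s [sD smin sV]] := minpair_sum_attained (vQ z).
set v := \sum_j vQ (s j) in sV.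
have ve_ge (k : 'I_(size E)) : -1 <= pair v (vQ E`_k).
  by apply: ((reflV v).1 sV); rewrite mem_nth.
have vz : pair v (vQ z) = \sum_k la k * pair v (vQ E`_k).
  by rewrite zE pair_sumr; apply: eq_bigr => k _; rewrite pairZr.
have v_tight : forall k, la k != 0 -> pair v (vQ E`_k) = -1.
  apply: (psum_tight (b := fun=> -1)) => //.
  rewrite -vz -mulr_suml la1 mul1r /v pair_suml -(eq_bigr _ (fun j _ => smin j)).
  exact: minpair_sum_lattice_le.
have s_tight k : la k != 0 -> forall j,
    pair (vQ (s j)) (vQ E`_k) = minpair (D j) (vQ E`_k).
  move=> la_neq0 j.
  apply: (@psum_tight r (fun=> 1) (fun i => pair (vQ (s i)) (vQ E`_k))
    (fun i => minpair (D i) (vQ E`_k))) (oner_neq0 _) => [//|i|].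
    exact: minpair_le (sD i).
  under eq_bigr do rewrite mul1r; under [X in _ <= X]eq_bigr do rewrite mul1r.
  by rewrite -pair_suml -/v v_tight // minpair_sum_normal_ge // mem_nth.
move=> j; rewrite smin zE pair_sumr; apply: eq_bigr => k _; rewrite pairZr.
by have [->|/s_tight ->] := eqVneq (la k) 0; rewrite ?mul0r.
Qed.

Lemma dual_in_nabla (z : lpt d) : z != 0 -> inConv E (vQ z) ->
  exists j, nabla j (vQ z).
Proof.
move=> z_neq0 [la [la_ge0 _ la1 zE]].
pose L j := - minpair (D j) (vQ z).
have LE j : L j = \sum_k la k * - minpair (D j) (vQ E`_k).
  rewrite /L (dual_minpair_linear z_neq0 la_ge0 la1 zE) -sumrN.
  by apply: eq_bigr => k _; rewrite mulrN.
have phi_le1 j (k : 'I_(size E)) : 0 <= - minpair (D j) (vQ E`_k) <= 1.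
  case: (minpair_nef j (mem_nth 0 (ltn_ord k))) => ->.
    by rewrite oppr0 lexx ler01.
  by rewrite opprK lexx ler01.
have L_ge0 j : 0 <= L j.
  by rewrite LE sumr_ge0 // => k _; rewrite mulr_ge0 //; case/andP: (phi_le1 j k).
have L_sum : \sum_j L j = 1.
  apply/eqP; rewrite eq_le; apply/andP; split; last first.
    by rewrite sumrN lerNr minpair_sum_lattice_le.
  rewrite (eq_bigr _ (fun j _ => LE j)) exchange_big /= -[X in _ <= X]la1.
  apply: ler_sum => k _; rewrite -mulr_sumr -[X in _ <= X]mulr1 ler_wpM2l //.
  by rewrite sumrN lerNl minpair_sum_normal_ge ?mem_nth.
have /existsP [j Lj_gt0] : [exists j, 0 < L j].
  apply: contraT => /existsPn L_le0; suff: \sum_j L j <= 0 by rewrite L_sum ler10.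
  by apply: sumr_le0 => j _; rewrite leNgt L_le0.
have Lj1 : L j = 1.
  apply/eqP; rewrite eq_le int_num_ge1 ?rpredN ?minpair_int // andbT.
  by rewrite -L_sum (bigD1 j) //= lerDl sumr_ge0.
have phi1 k : la k != 0 -> phi_is (D j) E`_k 1.
  move=> la_neq0; apply/phi_isE => //.
  apply: (psum_tight (a := fun=> 1) (b := fun k => - minpair (D j) (vQ E`_k))
    la_ge0 _ _ la_neq0).
    by move=> i; case/andP: (phi_le1 j i).
  by rewrite -LE Lj1 -mulr_suml la1 mulr1.
exists j; apply: (inConvP_cons (P := fun e => phi_is (D j) e 1)); first by right.
by exists la; split.
Qed.

Lemma dual_lattice_nabla (z : lpt d) : z != 0 ->
  inConv E (vQ z) <-> exists j, nabla j (vQ z).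
Proof.
move=> z_neq0; split; first exact: dual_in_nabla.
by case=> j /(nabla_minpair z_neq0) [].
Qed.

End NefPartition.

Theorem mainTheorem11 (d r : nat) (V E : seq 'rV[int]_d)
  (D : 'I_r -> seq 'rV[int]_d)
  (Hd : (0 < d)%N)
  (Hfull : full_dim V)
  (HE : forall e, e \in E <-> facet_normal V e)
  (Hrefl : forall x, inConv V x <-> (forall e, e \in E -> -1 <= pair x (vQ e)))
  (Hmink : forall x, inConv V x <->
     exists xs : 'I_r -> 'rV[rat]_d,
       (forall j, inConv (D j) (xs j)) /\ x = \sum_j xs j)
  (Hnef : forall j e, e \in E -> phi_is (D j) e 0 \/ phi_is (D j) e 1)
  (n0 : nat) (n : 'I_r -> nat)
  (Hn0 : lcount_is (inConv E) n0)
  (Hn : forall j,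
     lcount_is (inConvP (0 :: E) (fun e => e = 0 \/ phi_is (D j) e 1)) (n j)) :
  (n0 : int) = \sum_j (n j : int) - (r : int) + 1.
Proof.
have D_neq_nil j : D j != [::].
  have [p [pV _]] := Hfull; have [xs [Dxs _]] := (Hmink _).1 (pV ord0).
  exact: inConvP_neq_nil (Dxs j).
have [L0 [uL0 L0E <-]] := Hn0.
have /fin_all_exists [Ls LsP] := Hn.
have uLs j : uniq (Ls j) by case: (LsP j).
have LsE j z : z \in Ls j <-> nabla E D j (vQ z) by case: (LsP j).
have sizeLs j : size (Ls j) = n j by case: (LsP j).
have L0_0 : 0 \in L0.
  by apply/L0E; rewrite vQ0; apply: reflexive_zero_in_dual Hrefl Hd.
have Ls_0 j : 0 \in Ls j by apply/LsE; rewrite vQ0; apply: zero_in_nabla.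
have cover z : z != 0 -> z \in L0 <-> exists j, z \in Ls j.
  move=> z_neq0; rewrite L0E (dual_lattice_nabla Hrefl Hmink Hnef D_neq_nil z_neq0).
  by split=> -[j /LsE]; exists j.
have disj i j z : z != 0 -> z \in Ls i -> z \in Ls j -> i = j.
  by move=> z_neq0 /LsE zi /LsE zj; apply: nabla_disjoint zi zj.
have := size_pointed_partition uL0 uLs L0_0 Ls_0 cover disj.
rewrite card_ord (eq_bigr _ (fun j _ => sizeLs j)) => sizes.
rewrite -(big_morph Posz PoszD (erefl (Posz 0))); apply: (addIr (r : int)).
by rewrite -PoszD sizes PoszD addrAC subrK.
Qed.
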